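(* Let $\alpha\in(0,1)$ and $\nu\in\mathbb{N}$ with $2\nu>1/(1-\alpha)$, and let $K_{\alpha,\nu}(x)=\sum_{k=0}^{\infty}2^{-2\alpha\nu k}\phi(2^{2\nu k}x)$, where $\phi$ is the $2$-periodic function with $\phi(x)=|x|$ on $[-1,1]$. Then for every $M\ge 1$ and every $m\in\mathbb{N}$, \[ \frac{1}{2M}\int_{-M}^{M}\left|\frac{K_{\alpha,\nu}(x+2^{-2\nu m-1})-K_{\alpha,\nu}(x)}{2^{-2\nu m-1}}\right|dx\ \ge\ \frac14\,K(m,\nu,\alpha,1), \] where $K(m,\nu,\alpha,1)=\dfrac{2^{2\nu(1-\alpha)}-2}{2^{2\nu(1-\alpha)}-1}\big(2^{2\nu(1-\alpha)}\big)^{m}$. *)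

From Stdlib Require Import Reals Lra Lia.
From Coquelicot Require Import Coquelicot.
Open Scope R_scope.

(* phi : the 2-periodic function with phi x = |x| on [-1,1].
   Int_part is the floor; x - 2*floor((x+1)/2) lies in [-1,1). *)
Definition phi (x : R) : R := Rabs (x - 2 * IZR (Int_part ((x + 1) / 2))).

Definition Kan (alpha : R) (nu : nat) (x : R) : R :=
  Series (fun k : nat => Rpower 2 (- (2 * alpha * INR nu * INR k))
                         * phi (2 ^ (2 * nu * k) * x)).

Definition Kconst (m nu : nat) (alpha : R) : R :=
  (Rpower 2 (2 * INR nu * (1 - alpha)) - 2) / (Rpower 2 (2 * INR nu * (1 - alpha)) - 1)
  * (Rpower 2 (2 * INR nu * (1 - alpha))) ^ m.

From Stdlib Require Import Reals Lra Lia.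
From Coquelicot Require Import Coquelicot.
Open Scope R_scope.

(* Write r = 2^(2 nu (1 - alpha)) and h = 2^(-2 nu m - 1).  At every scale k > m the
   step h is an even integer, so those terms of the series do not move and the increment
   is a finite sum over k <= m.  Since phi is 1-Lipschitz, the k-th term of the
   difference quotient is at most r^k, while on the half [j, j + 1/2] of every cell of
   2^(2 nu m) x the top term k = m equals r^m exactly.  Hence the quotient is at least
   r^m - (r^m - 1)/(r - 1) >= K(m, nu, alpha, 1) on half of [-n, n] for each integer n;
   taking n = floor M >= M/2 gives the factor 1/4. *)

Lemma phi_spec x : exists n : Z, phi x = Rabs (x - 2 * IZR n) /\ Rabs (x - 2 * IZR n) <= 1.
Proof.
  exists (Int_part ((x + 1) / 2)); split; [reflexivity|].
  destruct (base_Int_part ((x + 1) / 2)); apply Rabs_le; lra.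
Qed.

Lemma Rabs_sub_even_le x n n' :
  Rabs (x - 2 * IZR n) <= 1 -> Rabs (x - 2 * IZR n) <= Rabs (x - 2 * IZR n').
Proof.
  intros Hn; destruct (Z.eq_dec n n') as [<-|Hne]; [lra|].
  assert (Hgap : 1 <= Rabs (IZR n - IZR n')).
  { rewrite <- minus_IZR, Rabs_Zabs; apply IZR_le; lia. }
  revert Hn Hgap; unfold Rabs; repeat destruct Rcase_abs; lra.
Qed.

Lemma phi_le_dist x n : phi x <= Rabs (x - 2 * IZR n).
Proof.
  destruct (phi_spec x) as [n0 [-> H]]; exact (Rabs_sub_even_le _ _ _ H).
Qed.

Lemma phi_eq_dist x n : Rabs (x - 2 * IZR n) <= 1 -> phi x = Rabs (x - 2 * IZR n).
Proof.
  intros Hn; apply Rle_antisym; [apply phi_le_dist|].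
  destruct (phi_spec x) as [n0 [-> _]]; exact (Rabs_sub_even_le _ _ _ Hn).
Qed.

Lemma phi_lipschitz x y : Rabs (phi x - phi y) <= Rabs (x - y).
Proof.
  destruct (phi_spec x) as [nx [Ex _]], (phi_spec y) as [ny [Ey _]].
  assert (Hx := phi_le_dist x ny); assert (Hy := phi_le_dist y nx).
  rewrite Ex, Ey in *; apply Rabs_le.
  revert Hx Hy; unfold Rabs; repeat destruct Rcase_abs; lra.
Qed.

Lemma phi_periodic x n : phi (x + 2 * IZR n) = phi x.
Proof.
  destruct (phi_spec x) as [n0 [-> H]].
  replace (Rabs (x - 2 * IZR n0)) with (Rabs (x + 2 * IZR n - 2 * IZR (n0 + n)))
    by (rewrite plus_IZR; f_equal; ring).
  apply phi_eq_dist; rewrite plus_IZR.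
  replace (x + 2 * IZR n - 2 * (IZR n0 + IZR n)) with (x - 2 * IZR n0) by ring; exact H.
Qed.

Lemma phi_bounds x : 0 <= phi x <= 1.
Proof. destruct (phi_spec x) as [n0 [-> H]]; split; [apply Rabs_pos | exact H]. Qed.

Lemma phi_half_step y (j : Z) : IZR j <= y <= IZR j + / 2 ->
  Rabs (phi (y + / 2) - phi y) = / 2.
Proof.
  intros Hy; destruct (Z.Even_or_Odd j) as [[i ->]|[i ->]];
    rewrite ?plus_IZR, mult_IZR in Hy.
  - rewrite (phi_eq_dist y i), (phi_eq_dist (y + / 2) i);
      unfold Rabs; repeat destruct Rcase_abs; lra.
  - assert (Hsucc : IZR (i + 1) = IZR i + 1) by (rewrite plus_IZR; reflexivity).
    rewrite (phi_eq_dist y (i + 1)), (phi_eq_dist (y + / 2) (i + 1)), Hsucc;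
      unfold Rabs; repeat destruct Rcase_abs; lra.
Qed.

Lemma lipschitz_continuous (f : R -> R) (C : R) x :
  (forall y z, Rabs (f y - f z) <= C * Rabs (y - z)) -> continuous f x.
Proof.
  intros Hf; apply continuity_pt_filterlim; intros eps Heps.
  assert (HC : 0 < Rabs C + 1) by (pose proof (Rabs_pos C); lra).
  exists (eps / (Rabs C + 1)); split; [apply Rdiv_lt_0_compat; lra|].
  intros y [_ Hy]; simpl in *; unfold R_dist in *.
  apply Rle_lt_trans with (C * Rabs (y - x)); [apply Hf|].
  apply Rle_lt_trans with ((Rabs C + 1) * Rabs (y - x)).
  - pose proof (Rle_abs C); pose proof (Rabs_pos (y - x)); nra.
  - apply (Rmult_lt_compat_l (Rabs C + 1)) in Hy; [|lra].
    replace ((Rabs C + 1) * (eps / (Rabs C + 1))) with eps in Hy by (field; lra); exact Hy.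
Qed.

Lemma Series_finite_support (u : nat -> R) m :
  (forall k, (m < k)%nat -> u k = 0) -> Series u = sum_n u m.
Proof.
  intros Hu; apply is_series_unique.
  apply (filterlim_ext_loc (fun _ => sum_n u m)); [|apply filterlim_const].
  exists m; intros n Hn; induction Hn as [|n Hn IH]; [reflexivity|].
  rewrite sum_Sn, <- IH, Hu by lia; symmetry; exact (plus_zero_r (G := R_AbelianMonoid) _).
Qed.

Lemma sum_n_geom_bound (u : nat -> R) r c n : 1 < r ->
  (forall k, (k <= n)%nat -> Rabs (u k) <= r ^ k * c) ->
  Rabs (sum_n u n) <= c * ((r ^ S n - 1) / (r - 1)).
Proof.
  intros Hr Hu; induction n as [|n IH].
  - rewrite sum_O; eapply Rle_trans; [apply Hu; lia|]; right; simpl; field; lra.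
  - rewrite sum_Sn; eapply Rle_trans; [apply Rabs_triang|].
    assert (IHn : Rabs (sum_n u n) <= c * ((r ^ S n - 1) / (r - 1))) by (apply IH; auto).
    assert (Hn := Hu (S n) (le_n _)).
    replace (c * ((r ^ S (S n) - 1) / (r - 1)))
      with (c * ((r ^ S n - 1) / (r - 1)) + r ^ S n * c) by (simpl; field; lra).
    change (plus ?a ?b) with (a + b); lra.
Qed.

Lemma sum_n_dominant_last (u : nat -> R) r c m : 1 < r ->
  (forall k, (k < m)%nat -> Rabs (u k) <= r ^ k * c) -> Rabs (u m) = r ^ m * c ->
  c * (r ^ m - (r ^ m - 1) / (r - 1)) <= Rabs (sum_n u m).
Proof.
  intros Hr Hu Hm; destruct m as [|m].
  - rewrite sum_O, Hm; right; simpl; field; lra.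
  - assert (Hs := sum_n_geom_bound u r c m Hr (fun k Hk => Hu k ltac:(lia))).
    assert (Ht := Rabs_triang_inv (u (S m)) (- sum_n u m)).
    rewrite sum_Sn, Rabs_Ropp, Hm in *; change (plus ?a ?b) with (a + b).
    replace (sum_n u m + u (S m)) with (u (S m) - - sum_n u m) by ring; lra.
Qed.

Lemma sum_n_lipschitz (u : R -> nat -> R) (C : nat -> R) y z n :
  (forall k, Rabs (u y k - u z k) <= C k * Rabs (y - z)) ->
  Rabs (sum_n (u y) n - sum_n (u z) n) <= sum_n C n * Rabs (y - z).
Proof.
  intros Hu; induction n as [|n IH].
  - rewrite !sum_O; apply Hu.
  - rewrite !sum_Sn; repeat change (plus ?a ?b) with (a + b).
    eapply Rle_trans; [|right; symmetry; apply Rmult_plus_distr_r].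
    eapply Rle_trans; [|apply Rplus_le_compat; [exact IH | apply Hu]].
    replace (sum_n (u y) n + u y (S n) - (sum_n (u z) n + u z (S n)))
      with ((sum_n (u y) n - sum_n (u z) n) + (u y (S n) - u z (S n))) by ring.
    apply Rabs_triang.
Qed.

Definition Kan_weight (alpha : R) (nu k : nat) : R :=
  Rpower 2 (- (2 * alpha * INR nu * INR k)).

Definition Kan_ratio (alpha : R) (nu : nat) : R := Rpower 2 (2 * INR nu * (1 - alpha)).

Definition Kan_incr (alpha : R) (nu : nat) (h x : R) (k : nat) : R :=
  Kan_weight alpha nu k * (phi (2 ^ (2 * nu * k) * (x + h)) - phi (2 ^ (2 * nu * k) * x)).

Section KanIncrements.

Variables (alpha : R) (nu : nat).

Lemma Kan_weight_pos k : 0 < Kan_weight alpha nu k.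
Proof. apply exp_pos. Qed.

Lemma Kan_weight_pow k : Kan_weight alpha nu k = Kan_weight alpha nu 1 ^ k.
Proof.
  unfold Kan_weight; rewrite <- Rpower_pow by apply exp_pos.
  rewrite Rpower_mult; f_equal; simpl; ring.
Qed.

Lemma Kan_weight_mul_pow2 k : Kan_weight alpha nu k * 2 ^ (2 * nu * k) = Kan_ratio alpha nu ^ k.
Proof.
  unfold Kan_weight, Kan_ratio.
  rewrite <- (Rpower_pow _ 2), <- Rpower_plus, <- Rpower_pow, Rpower_mult by (lra || apply exp_pos).
  f_equal; rewrite !mult_INR; simpl; ring.
Qed.

Lemma ex_series_Kan y : 0 < alpha -> (0 < nu)%nat ->
  ex_series (fun k => Kan_weight alpha nu k * phi (2 ^ (2 * nu * k) * y)).
Proof.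
  intros Ha Hnu.
  apply (@ex_series_le R_AbsRing R_CompleteNormedModule _ (fun k => Kan_weight alpha nu 1 ^ k)).
  - intros k; change (norm ?x) with (Rabs x); rewrite <- Kan_weight_pow.
    assert (Hw := Kan_weight_pos k); destruct (phi_bounds (2 ^ (2 * nu * k) * y)).
    rewrite Rabs_pos_eq by nra; nra.
  - apply ex_series_geom; rewrite Rabs_pos_eq by apply Rlt_le, Kan_weight_pos.
    unfold Kan_weight; rewrite <- (Rpower_O 2) by lra; apply Rpower_lt; [lra|].
    assert (0 < INR nu) by (apply lt_0_INR; lia); simpl; nra.
Qed.

(* The step [h] is an even integer at every scale [k > m], so by 2-periodicity of [phi]
   only the first [m + 1] terms of the series move. *)
Lemma Kan_increment_finite m x : 0 < alpha -> (0 < nu)%nat ->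
  let h := / 2 ^ (2 * nu * m + 1) in
  Kan alpha nu (x + h) - Kan alpha nu x = sum_n (Kan_incr alpha nu h x) m.
Proof.
  intros Ha Hnu h; unfold Kan.
  rewrite <- Series_minus by (apply ex_series_Kan; auto).
  rewrite (Series_ext _ (Kan_incr alpha nu h x)) by (intros k; unfold Kan_incr, Kan_weight; ring).
  apply Series_finite_support; intros k Hk.
  set (d := (2 * nu * k - 2 * nu * m - 2)%nat).
  assert (Hh : 2 ^ (2 * nu * k) * h = 2 * IZR (Z.of_nat (2 ^ d))).
  { rewrite <- INR_IZR_INZ, pow_INR; unfold h.
    replace (2 * nu * k)%nat with ((2 * nu * m + 1) + S d)%nat by (unfold d; nia).
    rewrite pow_add, <- tech_pow_Rmult; replace (INR 2) with 2 by (simpl; ring).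
    field; apply pow_nonzero; lra. }
  unfold Kan_incr; rewrite Rmult_plus_distr_l, Hh, phi_periodic; ring.
Qed.

Lemma Kan_incr_bound h x k : 0 <= h -> Rabs (Kan_incr alpha nu h x k) <= Kan_ratio alpha nu ^ k * h.
Proof.
  intros Hh; unfold Kan_incr.
  rewrite Rabs_mult, Rabs_pos_eq by apply Rlt_le, Kan_weight_pos.
  rewrite <- Kan_weight_mul_pow2, Rmult_assoc.
  apply Rmult_le_compat_l; [apply Rlt_le, Kan_weight_pos|].
  eapply Rle_trans; [apply phi_lipschitz|].
  assert (0 < 2 ^ (2 * nu * k)) by (apply pow_lt; lra).
  rewrite Rabs_pos_eq; nra.
Qed.

Lemma Kan_incr_lipschitz h x y k :
  Rabs (Kan_incr alpha nu h x k - Kan_incr alpha nu h y k) <= 2 * Kan_ratio alpha nu ^ k * Rabs (x - y).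
Proof.
  set (a := 2 ^ (2 * nu * k)).
  assert (Ha : 0 < a) by (apply pow_lt; lra).
  assert (H1 := phi_lipschitz (a * (x + h)) (a * (y + h))).
  assert (H2 := phi_lipschitz (a * x) (a * y)).
  replace (a * (x + h) - a * (y + h)) with (a * (x - y)) in H1 by ring.
  replace (a * x - a * y) with (a * (x - y)) in H2 by ring.
  rewrite Rabs_mult, (Rabs_pos_eq a) in H1, H2 by lra.
  unfold Kan_incr; fold a.
  rewrite <- Rmult_minus_distr_l, Rabs_mult, Rabs_pos_eq by apply Rlt_le, Kan_weight_pos.
  rewrite <- Kan_weight_mul_pow2; fold a.
  assert (Hw := Kan_weight_pos k).
  assert (Hd := Rabs_triang (phi (a * (x + h)) - phi (a * (y + h))) (- (phi (a * x) - phi (a * y)))).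
  rewrite Rabs_Ropp in Hd.
  replace (phi (a * (x + h)) - phi (a * (y + h)) + - (phi (a * x) - phi (a * y)))
    with (phi (a * (x + h)) - phi (a * x) - (phi (a * (y + h)) - phi (a * y))) in Hd by ring.
  nra.
Qed.

Lemma Kan_incr_top m x (j : Z) :
  let h := / 2 ^ (2 * nu * m + 1) in
  IZR j <= 2 ^ (2 * nu * m) * x <= IZR j + / 2 ->
  Rabs (Kan_incr alpha nu h x m) = Kan_ratio alpha nu ^ m * h.
Proof.
  intros h Hx.
  assert (Hh : 2 ^ (2 * nu * m) * h = / 2).
  { unfold h; rewrite pow_add; simpl; field; apply pow_nonzero; lra. }
  unfold Kan_incr; rewrite Rmult_plus_distr_l, Hh, Rabs_mult, (phi_half_step _ j Hx).
  rewrite Rabs_pos_eq by apply Rlt_le, Kan_weight_pos.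
  rewrite <- Kan_weight_mul_pow2, Rmult_assoc, Hh; reflexivity.
Qed.

End KanIncrements.

Lemma RInt_ge_const (f : R -> R) a b c : a <= b -> ex_RInt f a b ->
  (forall x, a < x < b -> c <= f x) -> (b - a) * c <= RInt f a b.
Proof.
  intros Hab Hf Hc.
  replace ((b - a) * c) with (RInt (fun _ => c) a b) by (rewrite RInt_const; reflexivity).
  apply RInt_le; auto; apply ex_RInt_const.
Qed.

Section NonnegIntegrals.

Variable f : R -> R.
Hypothesis f_cont : forall x, continuous f x.
Hypothesis f_ge0 : forall x, 0 <= f x.

Lemma ex_RInt_cont a b : ex_RInt f a b.
Proof. apply (@ex_RInt_continuous R_CompleteNormedModule); auto. Qed.

Lemma RInt_ge0 a b : a <= b -> 0 <= RInt f a b.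
Proof. intros Hab; apply RInt_ge_0; auto using ex_RInt_cont. Qed.

Lemma RInt_mono_interval a b a' b' : a' <= a -> a <= b -> b <= b' ->
  RInt f a b <= RInt f a' b'.
Proof.
  intros Ha Hab Hb.
  rewrite <- (RInt_Chasles f a' a b'), <- (RInt_Chasles f a b b') by apply ex_RInt_cont.
  repeat change (plus ?x ?y) with (x + y).
  assert (H1 := RInt_ge0 a' a Ha); assert (H2 := RInt_ge0 b b' Hb); lra.
Qed.

Lemma RInt_ge_half_cells a L c p : 0 < L ->
  (forall (k : nat) x, a + INR k * L <= x <= a + INR k * L + L / 2 -> c <= f x) ->
  INR p * (L / 2 * c) <= RInt f a (a + INR p * L).
Proof.
  intros HL Hc; induction p as [|p IH].
  - rewrite Rmult_0_l, Rmult_0_l, Rplus_0_r, RInt_point; apply Rle_refl.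
  - set (b := a + INR p * L) in *.
    rewrite <- (RInt_Chasles f a b), <- (RInt_Chasles f b (b + L / 2)) by apply ex_RInt_cont.
    repeat change (plus ?x ?y) with (x + y).
    assert (Hhalf : (b + L / 2 - b) * c <= RInt f b (b + L / 2)).
    { apply RInt_ge_const; [lra | apply ex_RInt_cont|].
      intros x Hx; apply (Hc p); unfold b in Hx; lra. }
    assert (Hrest : 0 <= RInt f (b + L / 2) (a + INR (S p) * L)).
    { apply RInt_ge0; rewrite S_INR; unfold b; lra. }
    rewrite S_INR in *; lra.
Qed.

Lemma RInt_sym_average_ge c M : 0 <= c -> 1 <= M ->
  (forall n : nat, INR n * c <= RInt f (- INR n) (INR n)) ->
  / (2 * M) * RInt f (- M) M >= / 4 * c.
Proof.
  intros Hc HM Hn.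
  destruct (base_Int_part M) as [Hz1 Hz2].
  assert (Hz : (0 < Int_part M)%Z) by (apply lt_IZR; lra).
  assert (Hz' : 1 <= IZR (Int_part M)) by (apply IZR_le; lia).
  set (n := Z.to_nat (Int_part M)).
  assert (HnM : INR n = IZR (Int_part M)).
  { unfold n; rewrite INR_IZR_INZ, Znat.Z2Nat.id; [reflexivity | lia]. }
  assert (Hmono := RInt_mono_interval (- INR n) (INR n) (- M) M).
  assert (Hint := Hn n).
  apply Rle_ge, Rle_trans with (/ (2 * M) * (INR n * c)).
  - apply Rmult_le_reg_l with (4 * M); [lra|].
    replace (4 * M * (/ (2 * M) * (INR n * c))) with (2 * INR n * c) by (field; lra).
    replace (4 * M * (/ 4 * c)) with (M * c) by field.
    apply Rmult_le_compat_r; lra.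
  - apply Rmult_le_compat_l; [apply Rlt_le, Rinv_0_lt_compat; lra|].
    apply Rle_trans with (RInt f (- INR n) (INR n)); [exact Hint | apply Hmono; lra].
Qed.

End NonnegIntegrals.

Section KanQuotient.

Variables (alpha : R) (nu m : nat).

Let h := / 2 ^ (2 * nu * m + 1).
Let r := Kan_ratio alpha nu.
Let Kan_quotient (x : R) := Rabs (sum_n (Kan_incr alpha nu h x) m / h).

Lemma Kan_step_pos : 0 < h.
Proof. apply Rinv_0_lt_compat, pow_lt; lra. Qed.

Lemma Kconst_eq : Kconst m nu alpha = (r - 2) / (r - 1) * r ^ m.
Proof. reflexivity. Qed.

Lemma Kconst_le_Kan_quotient x (j : Z) : 2 < r ->
  IZR j <= 2 ^ (2 * nu * m) * x <= IZR j + / 2 -> Kconst m nu alpha <= Kan_quotient x.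
Proof.
  intros Hr Hx; rewrite Kconst_eq; unfold Kan_quotient.
  assert (Hh := Kan_step_pos).
  assert (Hsum := sum_n_dominant_last (Kan_incr alpha nu h x) r h m ltac:(lra)
    (fun k _ => Kan_incr_bound alpha nu h x k (Rlt_le _ _ Hh)) (Kan_incr_top alpha nu m x j Hx)).
  unfold Rdiv at 2; rewrite Rabs_mult, (Rabs_pos_eq (/ h)) by (apply Rlt_le, Rinv_0_lt_compat; lra).
  apply Rmult_le_reg_r with h; [lra|].
  set (S := Rabs (sum_n _ m)) in *.
  replace (S * / h * h) with S by (field; lra).
  assert (E : r ^ m - (r ^ m - 1) / (r - 1) - (r - 2) / (r - 1) * r ^ m = / (r - 1))
    by (field; lra).
  assert (0 < / (r - 1)) by (apply Rinv_0_lt_compat; lra).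
  nra.
Qed.

Lemma Kan_quotient_continuous x : continuous Kan_quotient x.
Proof.
  apply (lipschitz_continuous _ (/ h * sum_n (fun k => 2 * r ^ k) m)); intros y z.
  assert (Hh := Kan_step_pos).
  assert (Hs := sum_n_lipschitz (Kan_incr alpha nu h) (fun k => 2 * r ^ k) y z m
    (Kan_incr_lipschitz alpha nu h y z)).
  unfold Kan_quotient; eapply Rle_trans; [apply Rabs_triang_inv2|].
  unfold Rdiv; rewrite <- Rmult_minus_distr_r, Rabs_mult, Rmult_comm, Rmult_assoc.
  rewrite Rabs_pos_eq by (apply Rlt_le, Rinv_0_lt_compat; lra).
  apply Rmult_le_compat_l; [apply Rlt_le, Rinv_0_lt_compat; lra | exact Hs].
Qed.

Lemma Kconst_nonneg : 2 < r -> 0 <= Kconst m nu alpha.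
Proof.
  intros Hr; rewrite Kconst_eq; apply Rmult_le_pos; [|apply pow_le; lra].
  apply Rmult_le_pos; [lra | apply Rlt_le, Rinv_0_lt_compat; lra].
Qed.

(* The [2 n 4^(nu m)] dyadic cells of length [4^(-nu m)] tiling [[-n, n]] each carry a
   half-cell on which the quotient is at least [Kconst]. *)
Lemma RInt_Kan_quotient_ge (n : nat) : 2 < r ->
  INR n * Kconst m nu alpha <= RInt Kan_quotient (- INR n) (INR n).
Proof.
  intros Hr.
  set (T := (2 ^ (2 * nu * m))%nat).
  assert (HT : INR T = 2 ^ (2 * nu * m)) by (unfold T; rewrite pow_INR; reflexivity).
  assert (HTpos : 0 < INR T) by (rewrite HT; apply pow_lt; lra).
  set (L := / INR T).
  assert (HL : 0 < L) by (apply Rinv_0_lt_compat; lra).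
  assert (Hcells := RInt_ge_half_cells Kan_quotient Kan_quotient_continuous (fun _ => Rabs_pos _)
    (- INR n) L (Kconst m nu alpha) (2 * n * T) HL).
  replace (- INR n + INR (2 * n * T) * L) with (INR n) in Hcells
    by (rewrite !mult_INR; unfold L; simpl; field; lra).
  replace (INR (2 * n * T) * (L / 2 * Kconst m nu alpha)) with (INR n * Kconst m nu alpha)
    in Hcells by (rewrite !mult_INR; unfold L; simpl; field; lra).
  apply Hcells; intros k x Hx.
  apply (Kconst_le_Kan_quotient x (Z.of_nat k - Z.of_nat n * Z.of_nat T) Hr).
  rewrite minus_IZR, mult_IZR, <- !INR_IZR_INZ, <- HT.
  assert (E : INR T * x = INR k - INR n * INR T + INR T * (x - (- INR n + INR k * L)))
    by (unfold L; field; lra).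
  assert (INR T * (L / 2) = / 2) by (unfold L; field; lra).
  rewrite E; split; nra.
Qed.

End KanQuotient.

Lemma Kan_ratio_gt_2 alpha nu : 0 < alpha < 1 -> 2 * INR nu > 1 / (1 - alpha) ->
  2 < Kan_ratio alpha nu.
Proof.
  intros Ha Hnu; unfold Kan_ratio; rewrite <- (Rpower_1 2) at 1 by lra.
  apply Rpower_lt; [lra|].
  apply (Rmult_lt_compat_r (1 - alpha)) in Hnu; [|lra].
  replace (1 / (1 - alpha) * (1 - alpha)) with 1 in Hnu by (field; lra); lra.
Qed.

Theorem proposition1 (alpha : R) (nu : nat)
  (Ha : 0 < alpha < 1) (Hnu : 2 * INR nu > 1 / (1 - alpha))
  (M : R) (HM : 1 <= M) (m : nat) :
  let h := / 2 ^ (2 * nu * m + 1) in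
  / (2 * M) * RInt (fun x => Rabs ((Kan alpha nu (x + h) - Kan alpha nu x) / h)) (- M) M
  >= / 4 * Kconst m nu alpha.
Proof.
  intros h.
  assert (Hr := Kan_ratio_gt_2 alpha nu Ha Hnu).
  assert (Hnu0 : (0 < nu)%nat).
  { destruct nu; [exfalso | lia]; simpl INR in Hnu.
    assert (0 < 1 / (1 - alpha)) by (apply Rdiv_lt_0_compat; lra); lra. }
  rewrite (RInt_ext _ (fun x => Rabs (sum_n (Kan_incr alpha nu h x) m / h))).
  2: { intros x _; unfold h; rewrite Kan_increment_finite by (lra || lia); reflexivity. }
  apply RInt_sym_average_ge; [apply Kan_quotient_continuous | intros; apply Rabs_pos |
    apply Kconst_nonneg, Hr | exact HM | intros n; apply RInt_Kan_quotient_ge, Hr].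
Qed.
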